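(* Consider the DAGP iteration described in the context, with parameters $\mu,\rho,\alpha>0$. Assume $\mathbf{W}$ has zero row sums, $\mathbf{Q}$ has zero column sums, $\ker(\mathbf{Q})=\ker(\mathbf{W}^T)$, and $\ker(\mathbf{W})=\mathrm{span}\{\mathbf{1}_M\}$. Let $(\mathbf{x}^v,\mathbf{g}^v,\mathbf{h}^v)_{v=1}^M$ be a fixed point of the DAGP iteration (i.e. if $(\mathbf{x}^v_k,\mathbf{g}^v_k,\mathbf{h}^v_k)=(\mathbf{x}^v,\mathbf{g}^v,\mathbf{h}^v)$ for all $v$, then the update produces $(\mathbf{x}^v_{k+1},\mathbf{g}^v_{k+1},\mathbf{h}^v_{k+1})=(\mathbf{x}^v,\mathbf{g}^v,\mathbf{h}^v)$ for all $v$) with $\sum_{v=1}^M\mathbf{h}^v=\mathbf{0}$. Then there is $\mathbf{x}\in\bigcap_{v=1}^M S^v$ with $\mathbf{x}^v=\mathbf{x}$ for all $v$, and $$\mathbf{0}\in\sum_{v=1}^M\big(\partial I_{S^v}(\mathbf{x})+\nabla f^v(\mathbf{x})\big),$$ so that $\mathbf{x}$ is an optimal solution of $\min_{\mathbf{x}\in\mathbb{R}^m}\frac1M\sum_{v=1}^Mf^v(\mathbf{x})$ subject to $\mathbf{x}\in\bigcap_{v=1}^MS^v$.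
   Context: There are $M$ agents $v\in\{1,\dots,M\}$. Each agent has a convex differentiable function $f^v:\mathbb{R}^m\to\mathbb{R}$ and a nonempty closed convex set $S^v\subseteq\mathbb{R}^m$. $\mathrm{P}_S(\mathbf{y})=\arg\min_{\mathbf{x}\in S}\|\mathbf{x}-\mathbf{y}\|_2$ is the Euclidean projection onto $S$. The normal cone is $\partial I_S(\mathbf{x})=\{\mathbf{g}:\mathbf{g}^T(\mathbf{z}-\mathbf{x})\le 0\ \forall \mathbf{z}\in S\}$ for $\mathbf{x}\in S$ and $\emptyset$ otherwise; the sum of sets is the Minkowski sum. $\mathbf{W}=[w_{vu}]$ and $\mathbf{Q}=[q_{vu}]$ are real $M\times M$ matrices. DAGP (Double Averaging and Gradient Projection) with parameters $\mu,\rho,\alpha>0$ maintains, for each agent $v$, vectors $\mathbf{x}^v_k,\mathbf{g}^v_k,\mathbf{h}^v_k\in\mathbb{R}^m$ and updates, for $k\ge0$ and all $v$: $\mathbf{z}^v_{k+1}=\mathbf{x}^v_k-\sum_{u=1}^M w_{vu}\mathbf{x}^u_k-\mu(\nabla f^v(\mathbf{x}^v_k)-\mathbf{g}^v_k)$; $\mathbf{x}^v_{k+1}=\mathrm{P}_{S^v}(\mathbf{z}^v_{k+1})$; $\mathbf{g}^v_{k+1}=\mathbf{g}^v_k+\rho\big[\nabla f^v(\mathbf{x}^v_k)-\mathbf{g}^v_k+\tfrac1\mu(\mathbf{z}^v_{k+1}-\mathbf{x}^v_{k+1})\big]+\alpha(\mathbf{h}^v_k-\mathbf{g}^v_k)$;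 $\mathbf{h}^v_{k+1}=\mathbf{h}^v_k-\sum_{u=1}^M q_{vu}(\mathbf{h}^u_k-\mathbf{g}^u_k)$. *)

From HB Require Import structures.
From mathcomp Require Import all_boot all_order all_algebra.
From mathcomp Require Import all_classical all_reals all_analysis.
Set Implicit Arguments. Unset Strict Implicit. Unset Printing Implicit Defensive.
Import Order.TTheory GRing.Theory Num.Theory.
Import numFieldNormedType.Exports.
Local Open Scope classical_set_scope.
Local Open Scope ring_scope.

Section DAGPDefs.
Variable R : realType.
Variable m : nat.
Notation vec := 'rV[R]_m.

Definition dotv (u v : vec) : R := \sum_(i < m) u 0 i * v 0 i.
Definition sqnorm2 (u : vec) : R := dotv u u.

Definition cvx_set (S : set vec) : Prop :=
  forall x y (t : R), S x -> S y -> 0 <= t <= 1 -> S (t *: x + (1 - t) *: y).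

Definition cvx_fun (f : vec -> R) : Prop :=
  forall x y (t : R), 0 <= t <= 1 ->
    f (t *: x + (1 - t) *: y) <= t * f x + (1 - t) * f y.

Definition is_gradient (f : vec -> R) (df : vec -> vec) : Prop :=
  forall x, differentiable f x /\ forall d : vec, 'D_d f x = dotv (df x) d.

Definition is_proj (S : set vec) (y p : vec) : Prop :=
  S p /\ forall z, S z -> sqnorm2 (p - y) <= sqnorm2 (z - y).

Definition normal_cone (S : set vec) (x : vec) : set vec :=
  [set g | S x /\ forall z, S z -> dotv g (z - x) <= 0].

Definition dagp_step (M : nat) (W Q : 'M[R]_M) (mu rho alpha : R)
    (S : 'I_M -> set vec) (df : 'I_M -> vec -> vec)
    (x g h x' g' h' : 'I_M -> vec) : Prop :=
  forall v : 'I_M,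
    let z := x v - \sum_(u < M) W v u *: x u - mu *: (df v (x v) - g v) in
    is_proj (S v) z (x' v) /\
    g' v = g v + rho *: (df v (x v) - g v + mu^-1 *: (z - x' v))
               + alpha *: (h v - g v) /\
    h' v = h v - \sum_(u < M) Q v u *: (h u - g u).

End DAGPDefs.

From HB Require Import structures.
From mathcomp Require Import all_boot all_order all_algebra.
From mathcomp Require Import all_classical all_reals all_analysis.
From mathcomp Require Import lra ring.

(* At a fixed point the h-update says [Q (h - g) = 0], hence [W^T (h - g) = 0],
   while the g-update says [alpha (h - g) = (rho / mu) W x]. As [ker W^T] is
   orthogonal to [range W], [h = g] and [W x = 0], i.e. all [x^v] equal some
   [xs]. The g-update then reads [(z^v - x^v) / mu = g^v - grad f^v(xs)], a normal
   vector to [S^v] at the projection [xs]; adding [grad f^v(xs)] and summing gives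
   [sum_v g^v = sum_v h^v = 0], and the gradient inequality of convex functions
   turns this stationarity into optimality. *)

Set Implicit Arguments. Unset Strict Implicit. Unset Printing Implicit Defensive.
Import Order.TTheory GRing.Theory Num.Theory.
Import numFieldNormedType.Exports.
Local Open Scope classical_set_scope.
Local Open Scope ring_scope.

Section MatrixKernels.
Variable R : realFieldType.

Lemma mulmx_eq0_colwise n p q (A : 'M[R]_(n, p)) (B : 'M[R]_(q, p)) r
    (C : 'M[R]_(p, r)) :
  (forall c : 'cV[R]_p, A *m c = 0 -> B *m c = 0) ->
  A *m C = 0 -> B *m C = 0.
Proof.
move=> AB AC; apply/matrixP => i j.
have BCj : B *m col j C = 0 by apply: AB; rewrite colE mulmxA AC mul0mx.
by move: BCj; rewrite colE mulmxA -colE => /colP/(_ i); rewrite !mxE.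
Qed.

Lemma trmx_mul_self_eq0 n p (C : 'M[R]_(n, p)) : C^T *m C = 0 -> C = 0.
Proof.
move=> CC0; apply/matrixP => i j; rewrite mxE.
have sq_ge0 k : true -> 0 <= C^T j k * C k j by rewrite mxE -expr2 sqr_ge0.
move/matrixP/(_ j j): CC0; rewrite !mxE => /(psumr_eq0P sq_ge0)/(_ i isT).
by rewrite mxE -expr2 => /eqP; rewrite sqrf_eq0 => /eqP.
Qed.

(* [C^T C = C^T W Y = (W^T C)^T Y = 0]. *)
Lemma ker_trmx_range_eq0 n p (W : 'M[R]_n) (C Y : 'M[R]_(n, p)) :
  W^T *m C = 0 -> C = W *m Y -> C = 0.
Proof.
move=> WC CWY; apply: trmx_mul_self_eq0.
by rewrite {2}CWY mulmxA -[W]trmxK -trmx_mul WC trmx0 !mul0mx.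
Qed.

Lemma ker_const_rows_eq n p (W : 'M[R]_n) (X : 'M[R]_(n, p)) :
  (forall c : 'cV[R]_n, W *m c = 0 -> exists a : R, c = a *: const_mx 1) ->
  W *m X = 0 -> forall u v, row u X = row v X.
Proof.
move=> kerW WX u v; apply/rowP => j; rewrite !mxE.
have [a Xj] : exists a : R, col j X = a *: const_mx 1.
  by apply: kerW; rewrite colE mulmxA WX mul0mx.
have colXj k : X k j = a by move/colP/(_ k): Xj; rewrite !mxE mulr1.
by rewrite !colXj.
Qed.

End MatrixKernels.

Section InnerProduct.
Variables (R : realType) (m : nat).
Implicit Types (u w : 'rV[R]_m) (a : R).

Lemma dotv0l w : dotv 0 w = 0.
Proof. by rewrite /dotv big1 // => i _; rewrite mxE mul0r. Qed.

Lemma dotvDl u u' w : dotv (u + u') w = dotv u w + dotv u' w.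
Proof. by rewrite /dotv -big_split; apply: eq_bigr => i _; rewrite mxE mulrDl. Qed.

Lemma dotvZl a u w : dotv (a *: u) w = a * dotv u w.
Proof. by rewrite /dotv mulr_sumr; apply: eq_bigr => i _; rewrite mxE mulrA. Qed.

Lemma dotvNl u w : dotv (- u) w = - dotv u w.
Proof. by rewrite -scaleN1r dotvZl mulN1r. Qed.

Lemma dotv_suml (I : finType) (F : I -> 'rV[R]_m) w :
  dotv (\sum_i F i) w = \sum_i dotv (F i) w.
Proof. by rewrite /dotv exchange_big; apply: eq_bigr => j _; rewrite summxE mulr_suml. Qed.

Lemma sqnorm2_ge0 u : 0 <= sqnorm2 u.
Proof. by apply: sumr_ge0 => i _; rewrite -expr2 sqr_ge0. Qed.

Lemma sqnorm2DZ u w a :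
  sqnorm2 (u + a *: w) = sqnorm2 u + 2 * a * dotv u w + a ^+ 2 * sqnorm2 w.
Proof.
rewrite /sqnorm2 /dotv !mulr_sumr -!big_split; apply: eq_bigr => i _.
by rewrite !mxE /=; ring.
Qed.

Lemma normal_coneZ (S : set 'rV[R]_m) x n a :
  0 <= a -> normal_cone S x n -> normal_cone S x (a *: n).
Proof.
by move=> a0 [Sx nS]; split=> // z Sz; rewrite dotvZl mulr_ge0_le0 ?nS.
Qed.

(* Minimality of [p] against [p + t (z - p)] gives
   [2 <y - p, z - p> <= t |z - p|^2] for all [0 < t <= 1]. *)
Lemma is_proj_normal_cone (S : set 'rV[R]_m) y p :
  cvx_set S -> is_proj S y p -> normal_cone S p (y - p).
Proof.
move=> cS [Sp pmin]; split=> // z Sz.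
set a := dotv (y - p) (z - p); set N := sqnorm2 (z - p).
have N0 : 0 <= N by exact: sqnorm2_ge0.
have small_step t : 0 < t <= 1 -> 2 * a <= t * N.
  move=> /andP[t0 t1].
  have Szp : S (t *: z + (1 - t) *: p) by apply: cS => //; rewrite (ltW t0) t1.
  move: (pmin _ Szp).
  have -> : t *: z + (1 - t) *: p - y = (p - y) + t *: (z - p).
    by apply/rowP => i; rewrite !mxE; ring.
  rewrite sqnorm2DZ -/N -opprB dotvNl -/a => H.
  have : 0 <= t * (t * N - 2 * a) by lra.
  by rewrite pmulr_rge0 // subr_ge0.
rewrite leNgt; apply/negP => a0.
have aN0 : 0 < a + N by lra.
have t0 : 0 < a / (a + N) by rewrite divr_gt0.
have t1 : a / (a + N) <= 1 by rewrite ler_pdivrMr // mul1r; lra.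
have := small_step _ (introT andP (conj t0 t1)).
rewrite mulrAC ler_pdivlMr //; nra.
Qed.

End InnerProduct.

Section ConvexOptimality.
Variables (R : realType) (m : nat).

(* The difference quotients [(f (x + t (y - x)) - f x) / t] are bounded by
   [f y - f x] for [0 < t <= 1], hence so is their right limit. *)
Lemma cvx_derive_le (f : 'rV[R]_m -> R) x y :
  cvx_fun f -> differentiable f x -> 'D_(y - x) f x <= f y - f x.
Proof.
move=> cf dfx; have := diff_derivable (v := y - x) dfx.
rewrite /derive; set q := (fun h : R => _) => cq.
have cq' : q @ 0^'+ --> lim (q @ 0^').
  apply: cvg_trans cq; apply: cvg_fmap2; apply: within_subset => u /= /lt0r_neq0 //.
apply: (cvgr_to_le cq'); near=> t.
have t0 : 0 < t by near: t; exact: nbhs_right_gt.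
have t1 : t <= 1 by near: t; exact: nbhs_right_le.
rewrite /q /= /shift.
have -> : t *: (y - x) + x = t *: y + (1 - t) *: x.
  by rewrite scalerBr scalerBl scale1r -addrA [- _ + x]addrC.
have := cf y x t; rewrite (ltW t0) t1 => /(_ isT) fcvx.
rewrite -[_ *: _]/(t^-1 * _) -(ler_pM2l t0) mulrA mulfV ?lt0r_neq0 // mul1r.
lra.
Unshelve. all: by end_near.
Qed.

Lemma cvx_gradient_le (f : 'rV[R]_m -> R) df x y :
  cvx_fun f -> is_gradient f df -> dotv (df x) (y - x) <= f y - f x.
Proof. by move=> cf /(_ x) [dfx <-]; exact: cvx_derive_le. Qed.

Lemma stationary_point_minimizes (I : finType) (f : I -> 'rV[R]_m -> R) df
    (S : I -> set 'rV[R]_m) (n : I -> 'rV[R]_m) xs y :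
  (forall i, cvx_fun (f i)) -> (forall i, is_gradient (f i) (df i)) ->
  (forall i, normal_cone (S i) xs (n i)) -> \sum_i (n i + df i xs) = 0 ->
  (forall i, S i y) -> \sum_i f i xs <= \sum_i f i y.
Proof.
move=> cf gf nS stat Sy.
have sum_dot0 : \sum_i dotv (n i) (y - xs) + \sum_i dotv (df i xs) (y - xs) = 0.
  rewrite -big_split; transitivity (dotv (\sum_i (n i + df i xs)) (y - xs)).
    by rewrite dotv_suml; apply: eq_bigr => i _; rewrite dotvDl.
  by rewrite stat dotv0l.
have normal_le0 : \sum_i dotv (n i) (y - xs) <= 0.
  by rewrite -oppr_ge0 -sumrN; apply: sumr_ge0 => i _; rewrite oppr_ge0 (nS i).2.
rewrite -subr_ge0 -sumrB; apply: le_trans (ler_sum _ (fun i _ => cvx_gradient_le xs y (cf i) (gf i))).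
lra.
Qed.

End ConvexOptimality.

Lemma constant_family_eq (T : Type) (t0 : T) n (a : 'I_n -> T) :
  (forall u v, a u = a v) -> exists c, forall v, a v = c.
Proof. by case: n a => [|n] a a_eq; [exists t0; case | exists (a ord0)]. Qed.

Section DAGPFixedPoint.
Variables (R : realType) (m M : nat) (W Q : 'M[R]_M) (mu rho alpha : R).
Variables (S : 'I_M -> set 'rV[R]_m) (df : 'I_M -> 'rV[R]_m -> 'rV[R]_m).
Variables (x g h : 'I_M -> 'rV[R]_m).
Hypotheses (mu_gt0 : 0 < mu) (rho_neq0 : rho != 0) (alpha_neq0 : alpha != 0).
Hypothesis kerQ : forall c : 'cV[R]_M, Q *m c = 0 -> W^T *m c = 0.
Hypothesis kerW :
  forall c : 'cV[R]_M, W *m c = 0 -> exists a : R, c = a *: const_mx 1.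
Hypothesis fixed : dagp_step W Q mu rho alpha S df x g h x g h.

Lemma dagp_fixed_h : Q *m \matrix_u (h u - g u) = 0.
Proof.
apply/row_matrixP => v; rewrite row_mul mulmx_sum_row row0.
have [_ [_ hv]] := fixed v.
under eq_bigr do rewrite rowK mxE.
by rewrite -[LHS](subKr (h v)) -hv subrr.
Qed.

Lemma dagp_fixed_g :
  alpha *: \matrix_u (h u - g u) = (rho / mu) *: (W *m \matrix_u x u).
Proof.
apply/row_matrixP => v; rewrite !linearZ /= rowK row_mul mulmx_sum_row.
under eq_bigr do rewrite rowK mxE.
have [_ [gv _]] := fixed v; move: gv.
set E := \sum_(u < M) _; set d := df v (x v) => gv.
apply/rowP => j; move/rowP/(_ j): gv; rewrite !mxE => gvj.
have scaled : mu^-1 * (x v 0 j - E 0 j - mu * (d 0 j - g v 0 j) - x v 0 j)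
              = - (E 0 j / mu) - (d 0 j - g v 0 j).
  by field; rewrite lt0r_neq0.
rewrite scaled in gvj; lra.
Qed.

Lemma dagp_fixed_normal v :
  cvx_set (S v) -> h v = g v -> normal_cone (S v) (x v) (g v - df v (x v)).
Proof.
move=> cvxS hg; have [proj [gv _]] := fixed v.
move: gv; rewrite hg subrr scaler0 addr0 -{1}[g v]addr0 => /addrI/esym/eqP.
rewrite scaler_eq0 (negbTE rho_neq0) /= addrC addr_eq0 opprB => /eqP <-.
by apply: normal_coneZ (is_proj_normal_cone cvxS proj); rewrite invr_ge0 ltW.
Qed.

Lemma dagp_fixed_residual_eq0 : \matrix_u (h u - g u) = 0.
Proof.
apply: (ker_trmx_range_eq0 (W := W) (Y := (alpha^-1 * (rho / mu)) *: \matrix_u x u)).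
  exact: mulmx_eq0_colwise kerQ dagp_fixed_h.
by rewrite -scalemxAr -scalerA -dagp_fixed_g scalerA mulVf ?scale1r.
Qed.

Lemma dagp_fixed_h_eq_g v : h v = g v.
Proof.
apply/eqP; rewrite -subr_eq0.
by move/row_matrixP/(_ v): dagp_fixed_residual_eq0; rewrite rowK row0 => ->.
Qed.

Lemma dagp_fixed_consensus : exists xs, forall v, x v = xs.
Proof.
have Wx0 : W *m \matrix_u x u = 0.
  move: dagp_fixed_g; rewrite dagp_fixed_residual_eq0 scaler0 => /esym/eqP.
  by rewrite scaler_eq0 mulf_eq0 invr_eq0 (negbTE rho_neq0) (gt_eqF mu_gt0) => /eqP.
apply: (constant_family_eq 0) => u v.
by have := ker_const_rows_eq kerW Wx0 u v; rewrite !rowK.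
Qed.

End DAGPFixedPoint.

Theorem theorem1 (R : realType) (m M : nat)
  (f : 'I_M -> 'rV[R]_m -> R) (df : 'I_M -> 'rV[R]_m -> 'rV[R]_m)
  (S : 'I_M -> set 'rV[R]_m)
  (W Q : 'M[R]_M) (mu rho alpha : R)
  (x g h : 'I_M -> 'rV[R]_m) :
  (forall v, cvx_fun (f v)) ->
  (forall v, is_gradient (f v) (df v)) ->
  (forall v, S v !=set0 /\ closed (S v) /\ cvx_set (S v)) ->
  0 < mu -> 0 < rho -> 0 < alpha ->
  (forall v : 'I_M, \sum_(u < M) W v u = 0) ->
  (forall u : 'I_M, \sum_(v < M) Q v u = 0) ->
  (forall c : 'cV[R]_M, Q *m c = 0 <-> W^T *m c = 0) ->
  (forall c : 'cV[R]_M, W *m c = 0 <-> exists a : R, c = a *: const_mx 1) ->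
  dagp_step W Q mu rho alpha S df x g h x g h ->
  \sum_(v < M) h v = 0 ->
  exists xs : 'rV[R]_m,
    (forall v, S v xs) /\ (forall v, x v = xs) /\
    (exists n : 'I_M -> 'rV[R]_m,
        (forall v, normal_cone (S v) xs (n v)) /\
        \sum_(v < M) (n v + df v xs) = 0) /\
    (forall y : 'rV[R]_m, (forall v, S v y) ->
        M%:R^-1 * \sum_(v < M) f v xs <= M%:R^-1 * \sum_(v < M) f v y).
Proof.
(* Zero row sums of [W] follow from [ker W = span 1]; zero column sums of [Q]
   only serve to preserve [sum_v h^v] along the iteration. *)
move=> cvxf gradf convS mu_gt0 rho_gt0 alpha_gt0 _ _ kerQ kerW fixed hsum0.
have [rho_neq0 alpha_neq0] := (lt0r_neq0 rho_gt0, lt0r_neq0 alpha_gt0).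
have kerQ' c := (kerQ c).1; have kerW' c := (kerW c).1.
have h_eq_g := dagp_fixed_h_eq_g mu_gt0 alpha_neq0 kerQ' fixed.
have [xs x_xs] := dagp_fixed_consensus mu_gt0 rho_neq0 alpha_neq0 kerQ' kerW' fixed.
have normal v : normal_cone (S v) xs (g v - df v xs).
  rewrite -(x_xs v); apply: (dagp_fixed_normal mu_gt0 rho_neq0 fixed).
    exact: (convS v).2.2.
  exact: h_eq_g.
have stationary : \sum_v (g v - df v xs + df v xs) = 0.
  by under eq_bigr do rewrite subrK -h_eq_g.
exists xs; split; first by move=> v; exact: (normal v).1.
split=> //; split; first by exists (fun v => g v - df v xs).
move=> y Sy; apply: ler_wpM2l; first by rewrite invr_ge0 ler0n.
exact: stationary_point_minimizes cvxf gradf normal stationary Sy.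
Qed.
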